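(* In the D-RR setting under the nonconvex assumptions, suppose $\alpha_t=\alpha$ for all $t$ with $0<\alpha\le\frac{1}{mL}$. Then for every epoch $t$ (and every realization of the permutations), $$f(\bar x_{t+1}^0)\le f(\bar x_t^0)-\frac{\alpha m}{2}\|\nabla f(\bar x_t^0)\|^2+\frac{L^2\alpha}{n}\sum_{\ell=0}^{m-1}\|\mathbf x_t^\ell-\mathbf 1(\bar x_t^\ell)^\intercal\|^2+\alpha L^2\sum_{\ell=0}^{m-1}\|\bar x_t^\ell-\bar x_t^0\|^2 .$$
   Context: D-RR setting. Let $n,m,p\ge1$ be integers and $[k]=\{1,\dots,k\}$. For $i\in[n]$, $\ell\in[m]$ let $f_{i,\ell}:\mathbb{R}^p\to\mathbb{R}$ be differentiable; $f_i:=\frac1m\sum_{\ell=1}^m f_{i,\ell}$, $f:=\frac1n\sum_{i=1}^n f_i$. Let $W=(w_{ij})\in\mathbb{R}^{n\times n}$ be nonnegative, symmetric, with $W\mathbf 1=\mathbf 1$, compliant with an undirected connected graph on $[n]$ (for $i\ne j$, $w_{ij}>0$ iff $\{i,j\}$ is an edge); $\rho_w$ is the spectral norm of $W-\frac1n\mathbf 1\mathbf 1^\intercal$. The D-RR algorithm: given initial points $x_{i,0}\in\mathbb{R}^p$ and stepsizes $\alpha_t>0$, at each epoch $t=0,1,\dots$ each agent $i$ draws a permutation $(\pi^i_0,\dots,\pi^i_{m-1})$ of $[m]$ uniformly at random, independently across agents and epochs; sets $x^0_{i,t}=x_{i,t}$; for $\ell=0,\dots,m-1$ sets $x^{\ell+1}_{i,t}=\sum_{j=1}^n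 w_{ij}\big(x^\ell_{j,t}-\alpha_t\nabla f_{j,\pi^j_\ell}(x^\ell_{j,t})\big)$; sets $x_{i,t+1}=x^m_{i,t}$. Notation: $\mathbf{x}_t^\ell\in\mathbb{R}^{n\times p}$ has $i$-th row $(x^\ell_{i,t})^\intercal$; $\bar x_t^\ell=\frac1n\sum_i x^\ell_{i,t}$; $\mathbf 1(\bar x_t^\ell)^\intercal$ is the $n\times p$ matrix all of whose rows equal $(\bar x_t^\ell)^\intercal$; $\|\cdot\|$ is Euclidean/Frobenius norm. Nonconvex assumptions: each $f_{i,\ell}$ has $L$-Lipschitz gradient and satisfies $f_{i,\ell}\ge\bar f_{i,\ell}$ for some constant $\bar f_{i,\ell}\in\mathbb{R}$. *)

From HB Require Import structures.
From mathcomp Require Import all_boot all_order all_algebra all_fingroup.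
From mathcomp Require Import all_classical all_reals all_analysis.
Set Implicit Arguments. Unset Strict Implicit. Unset Printing Implicit Defensive.
Import Order.TTheory GRing.Theory Num.Theory.
Import numFieldNormedType.Exports.
Local Open Scope ring_scope.

Section DRR.
Variable R : realType.

Definition sqnorm (a b : nat) (A : 'M[R]_(a, b)) : R :=
  \sum_(i < a) \sum_(j < b) A i j ^+ 2.

Definition enorm (a b : nat) (A : 'M[R]_(a, b)) : R := Num.sqrt (sqnorm A).

Definition grad (p : nat) (h : 'rV[R]_p -> R) (x : 'rV[R]_p) : 'rV[R]_p :=
  \row_(k < p) derive h x (delta_mx 0 k : 'rV[R]_p).

Definition favg (n m p : nat) (F : 'I_n -> 'I_m -> 'rV[R]_p -> R)
  (x : 'rV[R]_p) : R :=
  n%:R^-1 * \sum_(i < n) (m%:R^-1 * \sum_(l < m) F i l x).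

Definition xbar (n p : nat) (X : 'M[R]_(n, p)) : 'rV[R]_p :=
  n%:R^-1 *: \sum_(i < n) row i X.

(* the n x p matrix 1 (bar x)^T, all rows equal to xbar X *)
Definition consmx (n p : nat) (X : 'M[R]_(n, p)) : 'M[R]_(n, p) :=
  \matrix_(i < n) xbar X.

(* W is nonnegative, symmetric, row-stochastic and compliant with a connected
   undirected graph on 'I_n: edges {i,j}, i != j, are exactly the w_ij > 0. *)
Definition mixing_matrix (n : nat) (W : 'M[R]_n) : Prop :=
  [/\ forall i j, 0 <= W i j,
      W^T = W,
      W *m const_mx 1 = const_mx 1 :> 'cV[R]_n &
      forall i j : 'I_n, connect (fun a b : 'I_n => (a != b) && (0 < W a b)) i j].

Variables (n m p : nat) (F : 'I_n -> 'I_m -> 'rV[R]_p -> R) (W : 'M[R]_n)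
  (alpha : R).

Definition drr_step (sig : 'I_n -> 'I_m) (X : 'M[R]_(n, p)) : 'M[R]_(n, p) :=
  W *m (X - alpha *: \matrix_(j < n) grad (F j (sig j)) (row j X)).

Fixpoint drr_inner (pit : 'I_n -> {perm 'I_m}) (X : 'M[R]_(n, p)) (l : nat)
  : 'M[R]_(n, p) :=
  match l with
  | 0 => X
  | l'.+1 =>
      let Y := drr_inner pit X l' in
      if (insub l' : option 'I_m) is Some o
      then drr_step (fun j => pit j o) Y else Y
  end.

Fixpoint drr_x (X0 : 'M[R]_(n, p)) (pi : nat -> 'I_n -> {perm 'I_m}) (t : nat)
  : 'M[R]_(n, p) :=
  match t with
  | 0 => X0
  | t'.+1 => drr_inner (pi t') (drr_x X0 pi t') m
  end.

Definition drr_xl (X0 : 'M[R]_(n, p)) (pi : nat -> 'I_n -> {perm 'I_m})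
  (t l : nat) : 'M[R]_(n, p) :=
  drr_inner (pi t) (drr_x X0 pi t) l.

End DRR.

(* Gossip with the doubly stochastic W leaves the network average unchanged, so
   over one epoch the average moves by a single inexact gradient step
   x -> x - alpha d, where d sums over the m inner steps the agents' averaged
   component gradients taken at their local iterates.  For the L-smooth f the
   descent lemma and the polarization identity give, when alpha m L <= 1,
     f (x - alpha d) <= f x - alpha m / 2 |grad f x|^2
                        + alpha / (2 m) |d - m grad f x|^2.
   Since every agent's permutation visits each component exactly once, the
   same sum with all gradients taken at x equals m grad f x; the remaining
   error is bounded by Lipschitz continuity after splitting x_i^l - x into the
   consensus error x_i^l - xbar^l and the drift xbar^l - x. *)

From HB Require Import structures.
From mathcomp Require Import all_boot all_order all_algebra all_fingroup.
From mathcomp Require Import all_classical all_reals all_analysis.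
From mathcomp Require Import ring lra.
Import Order.TTheory GRing.Theory Num.Theory.
Import numFieldNormedType.Exports.
Set Implicit Arguments.
Unset Strict Implicit.
Unset Printing Implicit Defensive.
Local Open Scope ring_scope.

Section EuclideanRows.
Variable R : realType.
Implicit Types (p : nat) (c : R).

Definition dot p (u v : 'rV[R]_p) : R := \sum_(k < p) u 0 k * v 0 k.

Lemma sqnorm_row p (u : 'rV[R]_p) : sqnorm u = \sum_(k < p) u 0 k ^+ 2.
Proof. by rewrite /sqnorm big_ord1. Qed.

Lemma sqnorm_ge0 a b (A : 'M[R]_(a, b)) : 0 <= sqnorm A.
Proof. by do 2![apply: sumr_ge0 => ? _]; exact: sqr_ge0. Qed.

Lemma sqnorm_le_of_enorm_le a b a' b' (A : 'M[R]_(a, b)) (B : 'M[R]_(a', b')) c :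
  enorm A <= c * enorm B -> sqnorm A <= c ^+ 2 * sqnorm B.
Proof.
rewrite /enorm => le_AB.
have := sqr_sqrtr (sqnorm_ge0 A); have := sqr_sqrtr (sqnorm_ge0 B).
have := sqrtr_ge0 (sqnorm A); nra.
Qed.

Lemma sqnormZ p c (v : 'rV[R]_p) : sqnorm (c *: v) = c ^+ 2 * sqnorm v.
Proof. by rewrite !sqnorm_row mulr_sumr; apply: eq_bigr => k _; rewrite mxE exprMn. Qed.

Lemma sqnormD_le p (u v : 'rV[R]_p) :
  sqnorm (u + v) <= 2 * sqnorm u + 2 * sqnorm v.
Proof.
rewrite !sqnorm_row !mulr_sumr -big_split; apply: ler_sum => k _; rewrite mxE.
rewrite -subr_ge0.
have -> : 2 * u 0 k ^+ 2 + 2 * v 0 k ^+ 2 - (u 0 k + v 0 k) ^+ 2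
          = (u 0 k - v 0 k) ^+ 2 by ring.
exact: sqr_ge0.
Qed.

Lemma sqr_sum_le k (a : 'I_k -> R) : (\sum_i a i) ^+ 2 <= k%:R * \sum_i a i ^+ 2.
Proof.
case: k a => [|k] a; first by rewrite big_ord0 expr0n mul0r.
set S := \sum_i a i; set Q := \sum_i a i ^+ 2; set K : R := k.+1%:R.
have K_gt0 : 0 < K by rewrite ltr0n.
have : 0 <= \sum_i (K * a i - S) ^+ 2 by apply: sumr_ge0 => i _; exact: sqr_ge0.
suff -> : \sum_i (K * a i - S) ^+ 2 = K * (K * Q - S ^+ 2).
  by rewrite pmulr_rge0 // subr_ge0.
under eq_bigr => i _ do rewrite sqrrB exprMn.
rewrite big_split /= sumrB -mulr_sumr -/Q sumr_const card_ord.
rewrite sumrMnl -mulr_suml -mulr_sumr -/S -[S ^+ 2 *+ k.+1]mulr_natr mulr2n.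
rewrite -/K; ring.
Qed.

Lemma sqnorm_sum_le p k (v : 'I_k -> 'rV[R]_p) :
  sqnorm (\sum_i v i) <= k%:R * \sum_i sqnorm (v i).
Proof.
rewrite sqnorm_row; under eq_bigr => j _ do rewrite summxE.
under [X in _ <= _ * X]eq_bigr => i _ do rewrite sqnorm_row.
by rewrite exchange_big mulr_sumr; apply: ler_sum => j _; exact: sqr_sum_le.
Qed.

Lemma sqnorm_avg_le p k (v : 'I_k -> 'rV[R]_p) : (0 < k)%N ->
  sqnorm (k%:R^-1 *: \sum_i v i) <= k%:R^-1 * \sum_i sqnorm (v i).
Proof.
move=> k_gt0; rewrite sqnormZ.
apply: le_trans (ler_wpM2l (sqr_ge0 _) (sqnorm_sum_le v)) _.
by rewrite mulrA expr2 -(mulrA _ _ k%:R) mulVf ?mulr1 // pnatr_eq0 -lt0n.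
Qed.

Lemma mean_le k (a : 'I_k -> R) c :
  (0 < k)%N -> (forall i, a i <= c) -> k%:R^-1 * \sum_i a i <= c.
Proof.
move=> k_gt0 a_le; have k_gt0' : 0 < k%:R :> R by rewrite ltr0n.
rewrite ler_pdivrMl // mulr_natl.
by apply: le_trans (ler_sum _ (fun i _ => a_le i)) _; rewrite sumr_const card_ord.
Qed.

Lemma dotBl p (u v w : 'rV[R]_p) : dot (u - v) w = dot u w - dot v w.
Proof. by rewrite /dot -sumrB; apply: eq_bigr => k _; rewrite !mxE mulrBl. Qed.

Lemma dotZr p c (u v : 'rV[R]_p) : dot u (c *: v) = c * dot u v.
Proof. by rewrite /dot mulr_sumr; apply: eq_bigr => k _; rewrite mxE mulrCA. Qed.

Lemma dot_le_sqnorm p c (u v : 'rV[R]_p) :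
  2 * c * dot u v <= sqnorm u + c ^+ 2 * sqnorm v.
Proof.
rewrite !sqnorm_row /dot !mulr_sumr -subr_ge0 -big_split -sumrB.
apply: sumr_ge0 => k _.
have -> : u 0 k ^+ 2 + c ^+ 2 * v 0 k ^+ 2 - 2 * c * (u 0 k * v 0 k)
          = (u 0 k - c * v 0 k) ^+ 2 by ring.
exact: sqr_ge0.
Qed.

Lemma dot_polarization p c (g d : 'rV[R]_p) :
  2 * c * dot g d = c ^+ 2 * sqnorm g + sqnorm d - sqnorm (d - c *: g).
Proof.
rewrite !sqnorm_row /dot !mulr_sumr -big_split -sumrB /=.
by apply: eq_bigr => k _; rewrite !mxE; ring.
Qed.

End EuclideanRows.

Section SmoothDescent.
Variables (R : realType) (p : nat) (h : 'rV[R]_p -> R) (L : R).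
Hypothesis h_diff : forall x, differentiable h x.
Hypothesis grad_lipschitz :
  forall x y, sqnorm (grad h x - grad h y) <= L ^+ 2 * sqnorm (x - y).

Lemma derive_grad x v : derive h x v = dot (grad h x) v.
Proof.
rewrite deriveE // {1}(row_sum_delta v) linear_sum.
by apply: eq_bigr => k _; rewrite linearZ /= -deriveE // mxE mulrC.
Qed.

Let line_quotientE (x v : 'rV[R]_p) (s : R) :
  (fun t : R => t^-1 *: (((fun s => h (x + s *: v)) \o shift s) (t *: 1)
                          - h (x + s *: v)))
  = (fun t : R => t^-1 *: ((h \o shift (x + s *: v)) (t *: v) - h (x + s *: v))).
Proof.
rewrite funeqE => t /=.
by rewrite /shift /= scaler1 scalerDl [t *: v + _]addrC addrA (addrC (t *: v)).
Qed.

Lemma is_derive_line (x v : 'rV[R]_p) (s : R) :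
  is_derive s 1 (fun s : R => h (x + s *: v)) (dot (grad h (x + s *: v)) v).
Proof.
apply: DeriveDef; last first.
  have -> : derive (fun s : R => h (x + s *: v)) s 1 = derive h (x + s *: v) v.
    by rewrite /derive line_quotientE.
  exact: derive_grad.
by rewrite /derivable line_quotientE; exact: diff_derivable.
Qed.

Lemma dot_grad_increment_le (x v : 'rV[R]_p) (s : R) : 0 < s -> 0 < L ->
  dot (grad h (x + s *: v) - grad h x) v <= L * s * sqnorm v.
Proof.
move=> s_gt0 L_gt0; have Ls_gt0 : 0 < 2 * (L * s) by rewrite !mulr_gt0.
have := dot_le_sqnorm (L * s) (grad h (x + s *: v) - grad h x) v.
have := grad_lipschitz (x + s *: v) x; rewrite addrAC subrr add0r sqnormZ.
have -> : L ^+ 2 * (s ^+ 2 * sqnorm v) = (L * s) ^+ 2 * sqnorm v by ring.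
move=> Lip Young; rewrite -(ler_pM2l Ls_gt0).
have -> : 2 * (L * s) * (L * s * sqnorm v) = 2 * ((L * s) ^+ 2 * sqnorm v) by ring.
by rewrite mulrA; lra.
Qed.

Lemma smooth_descent (x v : 'rV[R]_p) : 0 < L ->
  h (x + v) <= h x + dot (grad h x) v + L / 2 * sqnorm v.
Proof.
move=> L_gt0.
pose c0 := dot (grad h x) v; pose K := L * sqnorm v / 2.
(* The gap to the quadratic upper model along the segment; it is nonincreasing. *)
pose psi : R -> R :=
  (fun s => h (x + s *: v)) - c0 \*: (@id R) - K \*: ((@id R) * (@id R)).
have psi_der s : is_derive s (1 : R) psi
   (dot (grad h (x + s *: v)) v - c0 *: 1 - K *: (s *: 1 + s *: 1)).
  have line_der := is_derive_line x v s; exact: is_deriveB.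
suff : psi 1 <= psi 0.
  have psiE s : psi s = h (x + s *: v) - c0 * s - K * (s * s) by [].
  rewrite !psiE scale0r scale1r addr0 !mul0r mulr0 !subr0 !mulr1.
  rewrite /K /c0 mulrAC; lra.
apply: (@ler0_derive1_le_cc R psi 0 1); last 3 first.
- by rewrite in_itv /= lexx ler01.
- by rewrite in_itv /= lexx ler01.
- exact: ler01.
- by move=> s _; case: (psi_der s).
- move=> s; rewrite in_itv /= => /andP[s_gt0 _].
  rewrite derive1E derive_val.
  have := dot_grad_increment_le x v s_gt0 L_gt0; rewrite dotBl -/c0.
  have -> : K *: (s%:A + s%:A) = L * s * sqnorm v :> R.
    rewrite /K; change (L * sqnorm v / 2 * (s * 1 + s * 1) = L * s * sqnorm v).
    by field.
  rewrite -[c0%:A]/(c0 * 1) mulr1; lra.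
- by apply: derivable_within_continuous => s _; case: (psi_der s).
Qed.

Lemma inexact_gradient_descent (x d : 'rV[R]_p) (c alpha : R) :
  0 < L -> 0 < c -> 0 < alpha -> alpha * c * L <= 1 ->
  h (x - alpha *: d) <= h x - alpha * c / 2 * sqnorm (grad h x)
                            + alpha / (2 * c) * sqnorm (d - c *: grad h x).
Proof.
move=> L_gt0 c_gt0 a_gt0 acL_le1.
have := smooth_descent x (- (alpha *: d)) L_gt0.
rewrite -scaleNr dotZr sqnormZ sqrrN mulNr.
have := dot_polarization c (grad h x) d; have := sqnorm_ge0 d.
move: (sqnorm d) (sqnorm (d - c *: grad h x)) (dot (grad h x) d) => D E G D_ge0 pol.
have c_neq0 : c != 0 by rewrite gt_eqF.
have -> : alpha * G = alpha * c / 2 * sqnorm (grad h x) + alpha / (2 * c) * D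
                      - alpha / (2 * c) * E.
  have -> : G = (2 * c * G) / (2 * c) by field.
  by rewrite pol; field.
suff : L / 2 * (alpha ^+ 2 * D) <= alpha / (2 * c) * D by lra.
have -> : L / 2 * (alpha ^+ 2 * D) = alpha / (2 * c) * D * (alpha * c * L) by field.
by rewrite ler_piMr // mulr_ge0 // divr_ge0 ?ltW // mulr_gt0.
Qed.

End SmoothDescent.

Section RowAverage.
Variables (R : realType) (n p : nat).
Implicit Types (X Y : 'M[R]_(n, p)).

Lemma xbarE X k : xbar X 0 k = n%:R^-1 * \sum_i X i k.
Proof.
by rewrite /xbar mxE summxE; congr (_ * _); apply: eq_bigr => i _; rewrite mxE.
Qed.

Lemma xbar_mixing (W : 'M[R]_n) X : mixing_matrix W -> xbar (W *m X) = xbar X.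
Proof.
case=> _ WT W1 _; apply/rowP => k; rewrite !xbarE; congr (_ * _).
under eq_bigr => i _ do rewrite mxE.
rewrite exchange_big /=; apply: eq_bigr => j _.
suff col_sum1 : \sum_i W i j = 1 by rewrite -mulr_suml col_sum1 mul1r.
have := congr1 (fun M : 'cV[R]_n => M j 0) W1; rewrite !mxE => <-.
by apply: eq_bigr => i _; rewrite mxE mulr1 -{1}WT mxE.
Qed.

Lemma xbarB X Y : xbar (X - Y) = xbar X - xbar Y.
Proof.
rewrite /xbar -scalerBr -sumrB; congr (_ *: _).
by apply: eq_bigr => i _; rewrite linearB.
Qed.

Lemma xbarZ c X : xbar (c *: X) = c *: xbar X.
Proof.
apply/rowP => k; rewrite [RHS]mxE !xbarE mulrCA; congr (_ * _).
by rewrite mulr_sumr; apply: eq_bigr => i _; rewrite mxE.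
Qed.

Lemma xbar_matrix (g : 'I_n -> 'rV[R]_p) :
  xbar (\matrix_(j < n) g j) = n%:R^-1 *: \sum_j g j.
Proof. by rewrite /xbar; congr (_ *: _); apply: eq_bigr => j _; rewrite rowK. Qed.

Lemma sqnorm_sub_consmx X :
  sqnorm (X - consmx X) = \sum_j sqnorm (row j X - xbar X).
Proof.
rewrite /sqnorm; apply: eq_bigr => j _; rewrite big_ord1.
by apply: eq_bigr => k _; rewrite !mxE.
Qed.

Lemma sqnorm_avg_lipschitz_le (g : 'I_n -> 'rV[R]_p -> 'rV[R]_p) (L : R) Y x :
  (0 < n)%N ->
  (forall j y z, sqnorm (g j y - g j z) <= L ^+ 2 * sqnorm (y - z)) ->
  sqnorm (n%:R^-1 *: \sum_j (g j (row j Y) - g j x))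
    <= 2 * L ^+ 2 / n%:R * sqnorm (Y - consmx Y) + 2 * L ^+ 2 * sqnorm (xbar Y - x).
Proof.
move=> n_gt0 g_lip; apply: le_trans (sqnorm_avg_le _ n_gt0) _.
have row_le j : sqnorm (g j (row j Y) - g j x)
    <= 2 * L ^+ 2 * sqnorm (row j Y - xbar Y) + 2 * L ^+ 2 * sqnorm (xbar Y - x).
  apply: le_trans (g_lip _ _ _) _.
  have := sqnormD_le (row j Y - xbar Y) (xbar Y - x); rewrite addrA subrK.
  have := sqr_ge0 L; nra.
apply: le_trans (ler_wpM2l _ (ler_sum _ (fun j _ => row_le j))) _.
  by rewrite invr_ge0 ler0n.
rewrite big_split /= -!mulr_sumr sumr_const card_ord sqnorm_sub_consmx.
rewrite -[_ *+ n]mulr_natl le_eqVlt; apply/orP; left; apply/eqP; field.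
by rewrite pnatr_eq0 -lt0n.
Qed.

End RowAverage.

Section AverageObjective.
Variables (R : realType) (n m p : nat) (F : 'I_n -> 'I_m -> 'rV[R]_p -> R).
Hypothesis F_diff : forall i l x, differentiable (F i l) x.

Lemma favgE : favg F = n%:R^-1 \*: \sum_(i < n) (m%:R^-1 \*: \sum_(l < m) F i l).
Proof.
apply/funext => x; rewrite /favg /= fct_sumE; congr (_ * _).
by apply: eq_bigr => i _ /=; rewrite fct_sumE.
Qed.

Lemma differentiable_favg x : differentiable (favg F) x.
Proof.
rewrite favgE; apply: differentiableZ; apply: differentiable_sum => i.
by apply: differentiableZ; apply: differentiable_sum.
Qed.

Lemma grad_favg x :
  grad (favg F) x = n%:R^-1 *: \sum_i (m%:R^-1 *: \sum_l grad (F i l) x).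
Proof.
apply/rowP => k; rewrite [LHS]mxE mxE summxE.
have F_der i l v : is_derive x v (F i l) (derive (F i l) x v).
  by apply: derivableP; apply: diff_derivable.
rewrite favgE derive_val; congr (_ * _); apply: eq_bigr => i _.
by rewrite mxE summxE; congr (_ * _); apply: eq_bigr => l _; rewrite mxE.
Qed.

Lemma grad_favg_lipschitz (L : R) : (0 < n)%N -> (0 < m)%N ->
  (forall i l x y, sqnorm (grad (F i l) x - grad (F i l) y) <= L ^+ 2 * sqnorm (x - y)) ->
  forall x y, sqnorm (grad (favg F) x - grad (favg F) y) <= L ^+ 2 * sqnorm (x - y).
Proof.
move=> n_gt0 m_gt0 F_lip x y; rewrite !grad_favg -scalerBr -sumrB.
apply: le_trans (sqnorm_avg_le _ n_gt0) _; apply: mean_le => // i.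
rewrite -scalerBr -sumrB; apply: le_trans (sqnorm_avg_le _ m_gt0) _.
by apply: mean_le => // l; exact: F_lip.
Qed.

End AverageObjective.

Section DRREpoch.
Variables (R : realType) (n m p : nat) (F : 'I_n -> 'I_m -> 'rV[R]_p -> R).
Variables (W : 'M[R]_n) (alpha : R) (pit : 'I_n -> {perm 'I_m}).
Hypothesis W_mix : mixing_matrix W.

Local Notation inner := (drr_inner F W alpha pit).

Definition drr_avg_grad (X : 'M[R]_(n, p)) (o : 'I_m) : 'rV[R]_p :=
  n%:R^-1 *: \sum_j grad (F j (pit j o)) (row j (inner X o)).

Lemma drr_innerS X (o : 'I_m) :
  inner X o.+1 = drr_step F W alpha (fun j => pit j o) (inner X o).
Proof. by rewrite /=; case: insubP => [u _ /val_inj -> | ] //; rewrite ltn_ord. Qed.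

Lemma xbar_drr_step sig (Y : 'M[R]_(n, p)) :
  xbar (drr_step F W alpha sig Y)
  = xbar Y - alpha *: (n%:R^-1 *: \sum_j grad (F j (sig j)) (row j Y)).
Proof. by rewrite /drr_step xbar_mixing // xbarB xbarZ xbar_matrix. Qed.

Lemma xbar_drr_inner X k : (k <= m)%N ->
  xbar (inner X k) = xbar X - alpha *: \sum_(o < m | (o < k)%N) drr_avg_grad X o.
Proof.
elim: k => [_|k IH k_lt_m]; first by rewrite big_pred0 // scaler0 subr0.
rewrite (drr_innerS X (Ordinal k_lt_m)) xbar_drr_step IH; last exact: ltnW.
rewrite [in RHS](bigD1 (Ordinal k_lt_m)) //= [in RHS]scalerDr [in RHS]opprD.
rewrite [in RHS]addrA [in LHS]addrAC.
congr (_ - _ - _); congr (_ *: _); apply: eq_bigl => o.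
by rewrite ltnS -(inj_eq val_inj) /= ltn_neqAle andbC.
Qed.

Lemma xbar_drr_epoch X :
  xbar (inner X m) = xbar X - alpha *: \sum_o drr_avg_grad X o.
Proof.
by rewrite xbar_drr_inner //; congr (_ - _ *: _); apply: eq_bigl => o; rewrite ltn_ord.
Qed.

Hypothesis F_diff : forall i l x, differentiable (F i l) x.

Lemma sum_perm_avg_grad x : (0 < m)%N ->
  \sum_o n%:R^-1 *: \sum_j grad (F j (pit j o)) x = m%:R *: grad (favg F) x.
Proof.
move=> m_gt0; rewrite grad_favg // -[in LHS]scaler_sumr exchange_big /=.
rewrite [RHS]scalerA mulrC -scalerA; congr (_ *: _).
rewrite scaler_sumr; apply: eq_bigr => j _.
rewrite scalerA mulfV ?pnatr_eq0 -?lt0n // scale1r.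
by apply: esym; apply: (reindex_inj (@perm_inj _ (pit j))).
Qed.

Lemma drr_epoch_grad_error (L : R) X : (0 < n)%N -> (0 < m)%N ->
  (forall i l x y, sqnorm (grad (F i l) x - grad (F i l) y) <= L ^+ 2 * sqnorm (x - y)) ->
  sqnorm (\sum_o drr_avg_grad X o - m%:R *: grad (favg F) (xbar X))
  <= m%:R * \sum_(o < m) (2 * L ^+ 2 / n%:R * sqnorm (inner X o - consmx (inner X o))
                         + 2 * L ^+ 2 * sqnorm (xbar (inner X o) - xbar X)).
Proof.
move=> n_gt0 m_gt0 F_lip; rewrite -sum_perm_avg_grad // -sumrB.
apply: le_trans (sqnorm_sum_le _) _; apply: ler_wpM2l => //; apply: ler_sum => o _.
rewrite /drr_avg_grad -scalerBr -sumrB.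
exact: (sqnorm_avg_lipschitz_le (g := fun j => grad (F j (pit j o)))).
Qed.

End DRREpoch.

Theorem lemma13 (R : realType) (n m p : nat)
  (F : 'I_n -> 'I_m -> 'rV[R]_p -> R) (W : 'M[R]_n) (L alpha : R)
  (X0 : 'M[R]_(n, p)) (pi : nat -> 'I_n -> {perm 'I_m}) :
  (0 < n)%N -> (0 < m)%N -> (0 < p)%N ->
  mixing_matrix W ->
  (forall i l x, differentiable (F i l) x) ->
  (forall i l x y,
      enorm (grad (F i l) x - grad (F i l) y) <= L * enorm (x - y)) ->
  (forall i l, exists fb : R, forall x, fb <= F i l x) ->
  0 < alpha -> alpha <= (m%:R * L)^-1 ->
  forall t : nat,
    let Xl := drr_xl F W alpha X0 pi t in
    favg F (xbar (drr_x F W alpha X0 pi t.+1))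
    <= favg F (xbar (Xl 0%N))
       - alpha * m%:R / 2 * sqnorm (grad (favg F) (xbar (Xl 0%N)))
       + L ^+ 2 * alpha / n%:R *
           \sum_(l < m) sqnorm (Xl l - consmx (Xl l))
       + alpha * L ^+ 2 *
           \sum_(l < m) sqnorm (xbar (Xl l) - xbar (Xl 0%N)).
Proof.
move=> n_gt0 m_gt0 _ W_mix F_diff F_lip _ a_gt0 a_le t /=.
rewrite /drr_xl /=; set X := drr_x F W alpha X0 pi t.
have m_gt0' : 0 < m%:R :> R by rewrite ltr0n.
have L_gt0 : 0 < L.
  by rewrite -(pmulr_rgt0 _ m_gt0') -invr_gt0 (lt_le_trans a_gt0 a_le).
have amL_le1 : alpha * m%:R * L <= 1.
  by rewrite -mulrA -ler_pdivlMr ?mulr_gt0 // div1r.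
have F_sqlip i l x y := sqnorm_le_of_enorm_le (F_lip i l x y).
rewrite xbar_drr_epoch //.
apply: le_trans (inexact_gradient_descent (differentiable_favg F_diff)
  (grad_favg_lipschitz F_diff n_gt0 m_gt0 F_sqlip) _ _ L_gt0 m_gt0' a_gt0 amL_le1) _.
have epoch_err := drr_epoch_grad_error W alpha (pi t) F_diff X n_gt0 m_gt0 F_sqlip.
rewrite -[leRHS]addrA lerD2l.
apply: le_trans (ler_wpM2l _ epoch_err) _; first by rewrite divr_ge0 ?mulr_ge0 ?ltW.
rewrite big_split /= -!mulr_sumr le_eqVlt; apply/orP; left; apply/eqP.
by field; rewrite !pnatr_eq0 -!lt0n n_gt0 m_gt0.
Qed.
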